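(* Let $m,n\in\mathbb{N}$ and $f:\mathbb{Z}_n\to\mathbb{C}$. Suppose $\Gamma\subseteq\mathbb{Z}_n$ satisfies $\|f-f|_\Gamma\|_2^2\le\epsilon$ for some $\epsilon>0$. Let $\ell:=\min(n,m)$ and let $g:\mathbb{Z}_m\to\mathbb{C}$ be defined by $g(x)=f(x)$ for $0\le x<\ell$ and $g(x)=0$ otherwise. Let $\epsilon'>0$, let $r=|\Gamma|\,\|f\|_2^2/(2\epsilon')$ and $\Gamma'=\bigcup_{\alpha\in\Gamma}\{\beta\in\mathbb{Z}_m:|\frac mn\alpha-\beta|_m\le r+1\}$. Then, with $t=n/m$, \[\|g-g|_{\Gamma'}\|_2^2\le t\epsilon+\epsilon'+2\sqrt{t\epsilon\epsilon'}.\]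
   Context: $\mathbb{Z}_n=\{0,\dots,n-1\}$ with addition mod $n$; elements are treated as these integer representatives. For $h:\mathbb{Z}_n\to\mathbb{C}$: $\langle h_1,h_2\rangle=\frac1n\sum_x h_1(x)\overline{h_2(x)}$, $\|h\|_2^2=\langle h,h\rangle$, $\chi_\alpha(x)=\exp(2\pi i\alpha x/n)$, $\widehat h(\alpha)=\langle h,\chi_\alpha\rangle$, and for $\Gamma\subseteq\mathbb{Z}_n$, $h|_\Gamma=\sum_{\alpha\in\Gamma}\widehat h(\alpha)\chi_\alpha$; analogously on $\mathbb{Z}_m$ with $m$ in place of $n$. For $k\in\mathbb{N}$, $x\in\mathbb{R}$: $|x|_k=\min\{|x-kz|:z\in\mathbb{Z}\}$. *)

From HB Require Import structures.
From mathcomp Require Import all_boot all_order all_algebra.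
From mathcomp Require Import all_classical all_reals.
From mathcomp Require Import trigo.
From mathcomp Require Import complex.
Set Implicit Arguments. Unset Strict Implicit. Unset Printing Implicit Defensive.
Import Order.TTheory GRing.Theory Num.Theory.
Local Open Scope ring_scope.
Local Open Scope classical_set_scope.

Section Fourier.
Variable R : realType.
Local Notation C := R[i].

(* Z_n is represented by 'I_n = {0,...,n-1} (integer representatives). *)

Definition ipZ (n : nat) (h1 h2 : 'I_n -> C) : C :=
  (n%:R)^-1 * \sum_(x : 'I_n) h1 x * conjc (h2 x).

(* ||h||_2^2 = <h,h> (a real number; we take its real part, the imaginary
   part being 0). *)
Definition norm2sq (n : nat) (h : 'I_n -> C) : R := complex.Re (ipZ h h).

Definition chi (n : nat) (alpha : 'I_n) (x : 'I_n) : C :=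
  let t : R := (2 * pi * (val alpha)%:R * (val x)%:R) / (n%:R) in
  (cos t +i* sin t)%C.

Definition fhat (n : nat) (h : 'I_n -> C) (alpha : 'I_n) : C :=
  ipZ h (chi alpha).

Definition restrF (n : nat) (h : 'I_n -> C) (G : {set 'I_n}) : 'I_n -> C :=
  fun x => \sum_(alpha in G) fhat h alpha * chi alpha x.

Definition distmod (k : nat) (x : R) : R :=
  inf [set `|x - (k%:R) * (z%:~R)| | z in [set: int]].

Definition extend (n m : nat) (f : 'I_n -> C) : 'I_m -> C :=
  fun x => if (val x < minn n m)%N then
             match @insub nat (fun k => k < n)%N _ (val x) with
             | Some y => f y
             | None => 0
             end
           else 0.

Definition Gamma' (n m : nat) (G : {set 'I_n}) (r : R) : {set 'I_m} :=
  [set beta : 'I_m | [exists alpha in G,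
     distmod m ((m%:R / n%:R) * (val alpha)%:R - (val beta)%:R) <= r + 1]].

End Fourier.

(* Split [f = f|_G + e].  Extending by zero to [Z_m] multiplies squared L2 norms
   by at most [n/m], so by Parseval the extension of [e] puts Fourier mass at
   most [t eps] off [G'].  The extension of a character [chi_a] has a truncated
   geometric sum as Fourier coefficient at [b]; by Jordan's inequality its square
   is at most [1 / (4 d^2)], where [d] is the distance from [(m/n) a] to [b]
   modulo [m], and summing [1 / (4 d^2)] over the [b] at distance [> r + 1] on
   both sides gives at most [1 / (2 r)].  Cauchy-Schwarz over [a] in [G] then
   bounds the mass of the extension of [f|_G] off [G'] by [|G| |f|^2 / (2 r)],
   which is [eps'], and Minkowski's inequality combines the two bounds. *)

From HB Require Import structures.
From mathcomp Require Import all_boot all_order all_algebra.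
From mathcomp Require Import all_classical all_reals.
From mathcomp Require Import complex.
From mathcomp Require Import topology normedtype derive trigo.
From mathcomp Require Import ring lra zify.
Import Order.TTheory GRing.Theory Num.Theory.
Import numFieldNormedType.Exports Normc.

Set Implicit Arguments.
Unset Strict Implicit.
Unset Printing Implicit Defensive.
Local Open Scope ring_scope.

Section ComplexModulus.
Variable R : realType.
Local Notation C := R[i].

Lemma normc_ge0 (z : C) : 0 <= normc z.
Proof. by case: z => a b; exact: sqrtr_ge0. Qed.

Lemma sqr_normc_ReIm (z : C) : normc z ^+ 2 = complex.Re z ^+ 2 + complex.Im z ^+ 2.
Proof. by case: z => a b; rewrite /= sqr_sqrtr // addr_ge0 ?sqr_ge0. Qed.

Lemma mulcJ_normc (z : C) : z * conjc z = (normc z ^+ 2)%:C%C.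
Proof.
rewrite sqr_normc_ReIm; case: z => a b /=.
by apply/eqP; rewrite eq_complex /=; apply/andP; split; apply/eqP; ring.
Qed.

(* Rewriting with [rmorphM] or [rmorph_sum] would leave [conjc] hidden behind its morphism instance. *)
Lemma conjcM (z w : C) : conjc (z * w) = conjc z * conjc w.
Proof. exact: rmorphM. Qed.

Lemma conjc_sum (I : finType) (P : pred I) (F : I -> C) :
  conjc (\sum_(i | P i) F i) = \sum_(i | P i) conjc (F i).
Proof. exact: rmorph_sum. Qed.

Lemma normc_sum_le (I : finType) (P : pred I) (F : I -> C) :
  normc (\sum_(i | P i) F i) <= \sum_(i | P i) normc (F i).
Proof.
elim/big_rec2: _ => [|i y z _ IH]; first by rewrite normc0.
by apply: le_trans (le_normcD _ _) _; rewrite lerD2l.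
Qed.

Definition cis (t : R) : C := (cos t +i* sin t)%C.

Lemma cis0 : cis 0 = 1.
Proof. by rewrite /cis cos0 sin0. Qed.

Lemma cisD a b : cis a * cis b = cis (a + b).
Proof.
rewrite /cis sinD cosD.
by apply/eqP; rewrite eq_complex /=; apply/andP; split; apply/eqP; ring.
Qed.

Lemma cisN a : conjc (cis a) = cis (- a).
Proof. by rewrite /cis /conjc sinN cosN. Qed.

Lemma cisX a j : cis a ^+ j = cis (j%:R * a).
Proof.
elim: j => [|j IH]; first by rewrite expr0 mul0r cis0.
by rewrite exprS IH cisD mulrS mulrDl mul1r.
Qed.

Lemma cis_2piMn (j : nat) : cis (2 * pi * j%:R) = 1.
Proof. by rewrite mulrC -cisX /cis mulr_natl cos2pi sin2pi expr1n. Qed.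

Lemma normc_cis a : normc (cis a) = 1.
Proof. by rewrite /= cos2Dsin2 sqrtr1. Qed.

Lemma sqr_normc_1Bcis a : normc (1 - cis a) ^+ 2 = 2 - 2 * cos a.
Proof. by rewrite sqr_normc_ReIm /=; have := cos2Dsin2 a; nra. Qed.

(* (1 - w) * (1 + w + ... + w^(l-1)) = 1 - w^l has modulus at most 2. *)
Lemma normc_1Bcis_geom_le a l :
  normc (1 - cis a) * normc (\sum_(i < l) cis a ^+ i) <= 2.
Proof.
rewrite -normcM -opprB mulNr -subrX1 opprB cisX.
apply: le_trans (le_normcD _ _) _.
by rewrite normcN normc1 normc_cis.
Qed.

End ComplexModulus.

Lemma twoBcos_mul2 (R : realType) (a : R) : 2 - 2 * cos (2 * a) = 4 * sin a ^+ 2.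
Proof. by rewrite (mulr_natl a 2) cos_mulr2n mulr2n cos2sin2; ring. Qed.

Lemma sin_neq0 (R : realType) (y : R) : 0 < `|y| < pi -> sin y != 0.
Proof.
move=> /andP[ny0 nypi]; case: (lerP 0 y) => y0.
  by rewrite gt_eqF // sin_gt0_pi // -(ger0_norm y0) ny0 nypi.
by rewrite -[y]opprK sinN oppr_eq0 gt_eqF // sin_gt0_pi // -(ltr0_norm y0) ny0.
Qed.

Section Characters.
Variables (R : realType) (k : nat).
Hypothesis k_gt0 : (0 < k)%N.
Local Notation C := R[i].

Let k_neq0 : (k%:R : R) != 0.
Proof. by rewrite pnatr_eq0 -lt0n. Qed.

Let kC_neq0 : (k%:R : C) != 0.
Proof. by rewrite pnatr_eq0 -lt0n. Qed.

Lemma chiE (a x : 'I_k) : chi R a x = cis (2 * pi * (val a)%:R * (val x)%:R / k%:R).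
Proof. by []. Qed.

Lemma chiC (a x : 'I_k) : chi R a x = chi R x a.
Proof. by rewrite !chiE (mulrAC (2 * pi)). Qed.

Lemma sum_chi_mulJ (a b : 'I_k) :
  \sum_(x : 'I_k) chi R a x * conjc (chi R b x) = if a == b then k%:R else 0.
Proof.
set y : R := pi * ((val a)%:R - (val b)%:R) / k%:R.
have chi_mulJ x : chi R a x * conjc (chi R b x) = cis (2 * y) ^+ val x.
  by rewrite !chiE cisN cisD cisX; congr cis; rewrite /y; field.
under eq_bigr do rewrite chi_mulJ.
have [eq_ab|neq_ab] := eqVneq a b.
  rewrite /y eq_ab subrr mulr0 mul0r mulr0 cis0.
  by under eq_bigr do rewrite expr1n; rewrite sumr_const card_ord.
have cis_k : cis (2 * y) ^+ k = 1.
  rewrite cisX.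
  have -> : k%:R * (2 * y) = 2 * pi * (val a)%:R + - (2 * pi * (val b)%:R).
    by rewrite /y; field.
  by rewrite -cisD -cisN !cis_2piMn conjc1 mulr1.
have sin_y : sin y != 0.
  have a_lt : ((val a)%:R : R) < k%:R by rewrite ltr_nat ltn_ord.
  have b_lt : ((val b)%:R : R) < k%:R by rewrite ltr_nat ltn_ord.
  have d_lt : `|(val a)%:R - (val b)%:R| < (k%:R : R).
    by rewrite ltr_norml; apply/andP; split; have := ler0n R a; have := ler0n R b; lra.
  have d_gt0 : 0 < `|(val a)%:R - (val b)%:R : R|.
    by rewrite normr_gt0 subr_eq0 eqr_nat; apply: contra neq_ab => /eqP/val_inj ->.
  apply: sin_neq0; rewrite /y normrM normrM normfV gtr0_norm ?pi_gt0 //.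
  rewrite normr_nat -mulrA mulr_gt0 ?pi_gt0 ?divr_gt0 ?ltr0n //=.
  by rewrite gtr_pMr ?pi_gt0 // ltr_pdivrMr ?ltr0n // mul1r.
have cis_neq1 : cis (2 * y) - 1 != 0.
  rewrite -oppr_eq0 opprB; apply: contraNneq sin_y => cis1.
  have := sqr_normc_1Bcis (2 * y); rewrite twoBcos_mul2 cis1 normc0 expr0n /=.
  move=> /esym/eqP.
  by rewrite mulf_eq0 sqrf_eq0 pnatr_eq0.
by apply/eqP; move: cis_k => /eqP; rewrite -subr_eq0 subrX1 mulf_eq0 (negbTE cis_neq1).
Qed.

Lemma fhat_eq (u v : 'I_k -> C) b : u =1 v -> fhat u b = fhat v b.
Proof. by move=> uv; rewrite /fhat /ipZ; under eq_bigr do rewrite uv. Qed.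

Lemma fhatD (u v : 'I_k -> C) b :
  fhat (fun x => u x + v x) b = fhat u b + fhat v b.
Proof.
by rewrite /fhat /ipZ; under eq_bigr do rewrite mulrDl; rewrite big_split mulrDr.
Qed.

Lemma fhatB (u v : 'I_k -> C) b :
  fhat (fun x => u x - v x) b = fhat u b - fhat v b.
Proof.
by rewrite /fhat /ipZ; under eq_bigr do rewrite mulrBl; rewrite sumrB mulrBr.
Qed.

Lemma fhat_sum (I : finType) (P : pred I) (c : I -> C) (w : I -> 'I_k -> C) b :
  fhat (fun x => \sum_(i | P i) c i * w i x) b = \sum_(i | P i) c i * fhat (w i) b.
Proof.
rewrite /fhat /ipZ; under eq_bigr do rewrite mulr_suml.
rewrite exchange_big mulr_sumr; apply: eq_bigr => i _.
by rewrite !mulr_sumr; apply: eq_bigr => x _; ring.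
Qed.

Lemma fhat_chi (a b : 'I_k) : fhat (chi R a) b = (a == b)%:R.
Proof. by rewrite /fhat /ipZ sum_chi_mulJ; case: eqP; rewrite ?mulr0 ?mulVf. Qed.

Lemma norm2sqE (u : 'I_k -> C) : norm2sq u = k%:R^-1 * \sum_x normc (u x) ^+ 2.
Proof.
rewrite /norm2sq /ipZ; under eq_bigr do rewrite mulcJ_normc.
by rewrite -rmorph_sum -(rmorph_nat (real_complex R)) -fmorphV -rmorphM.
Qed.

Lemma sum_fhat_mulJ (u : 'I_k -> C) :
  \sum_b fhat u b * conjc (fhat u b) = ipZ u u.
Proof.
have fhat_mulJ b : fhat u b * conjc (fhat u b) = k%:R^-1 * k%:R^-1 *
    \sum_x \sum_y u x * conjc (u y) * (chi R y b * conjc (chi R x b)).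
  rewrite /fhat /ipZ conjcM conjc_sum conjc_inv conjc_nat mulrACA mulr_suml.
  congr (_ * _); apply: eq_bigr => x _; rewrite mulr_sumr; apply: eq_bigr => y _.
  by rewrite conjcM conjcK (chiC x b) (chiC y b); ring.
under eq_bigr do rewrite fhat_mulJ.
rewrite -mulr_sumr exchange_big /=.
under eq_bigr do rewrite exchange_big /=.
under eq_bigr do under eq_bigr do rewrite -mulr_sumr sum_chi_mulJ.
rewrite /ipZ -mulrA; congr (_ * _); rewrite mulr_sumr; apply: eq_bigr => x _.
rewrite (bigD1 x) //= eqxx big1 ?addr0 => [|y /negbTE ->]; last by rewrite mulr0.
by rewrite mulrCA mulVf ?mulr1.
Qed.

Lemma parseval (u : 'I_k -> C) : \sum_b normc (fhat u b) ^+ 2 = norm2sq u.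
Proof.
rewrite /norm2sq -sum_fhat_mulJ.
by rewrite (eq_bigr _ (fun b _ => mulcJ_normc (fhat u b))) -rmorph_sum.
Qed.

Lemma sum_fhat_le_norm2sq (P : pred 'I_k) (u : 'I_k -> C) :
  \sum_(b | P b) normc (fhat u b) ^+ 2 <= norm2sq u.
Proof.
rewrite -parseval [leRHS](bigID P) /= lerDl.
by apply: sumr_ge0 => b _; exact: sqr_ge0.
Qed.

Lemma norm2sq_sub_restrF (u : 'I_k -> C) (S : {set 'I_k}) :
  norm2sq (fun x => u x - restrF u S x) = \sum_(b | b \notin S) normc (fhat u b) ^+ 2.
Proof.
rewrite -parseval [RHS]big_mkcond /=; apply: eq_bigr => b _.
rewrite fhatB /restrF fhat_sum; under eq_bigr do rewrite fhat_chi.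
case: (boolP (b \in S)) => bS /=.
  rewrite (bigD1 b) //= eqxx mulr1 big1 ?addr0 ?subrr ?normc0 ?expr0n //.
  by move=> a /andP[_ /negbTE ->]; rewrite mulr0.
by rewrite big1 ?subr0 // => a aS; case: eqP => [ab|]; [rewrite -ab aS in bS|rewrite mulr0].
Qed.

End Characters.

Section CauchySchwarz.
Variables (R : realType) (I : finType) (P : pred I).
Local Notation C := R[i].

(* Lagrange's identity: the defect is half of a sum of squares. *)
Lemma cauchy_schwarz (a b : I -> R) :
  (\sum_(i | P i) a i * b i) ^+ 2 <=
  (\sum_(i | P i) a i ^+ 2) * (\sum_(i | P i) b i ^+ 2).
Proof.
set D := \sum_(i | P i) \sum_(j | P j) (a i ^+ 2 * b j ^+ 2 - a i * b i * (a j * b j)).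
have D_ge0 : 0 <= D + D.
  have sq i j : (a i * b j - a j * b i) ^+ 2 = (a i ^+ 2 * b j ^+ 2 - a i * b i * (a j * b j))
      + (a j ^+ 2 * b i ^+ 2 - a j * b j * (a i * b i)) by ring.
  have : 0 <= \sum_(i | P i) \sum_(j | P j) (a i * b j - a j * b i) ^+ 2.
    by apply: sumr_ge0 => i _; apply: sumr_ge0 => j _; exact: sqr_ge0.
  under eq_bigr do under eq_bigr do rewrite sq.
  under eq_bigr do rewrite big_split /=.
  by rewrite big_split /= [X in _ + X]exchange_big.
have D_eq : D = (\sum_(i | P i) a i ^+ 2) * (\sum_(i | P i) b i ^+ 2) -
    (\sum_(i | P i) a i * b i) ^+ 2.
  by rewrite /D expr2 !big_distrlr -sumrB /=; apply: eq_bigr => i _; rewrite sumrB.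
by rewrite D_eq in D_ge0; lra.
Qed.

Lemma sum_mul_le_sqrt (a b : I -> R) :
  \sum_(i | P i) a i * b i <=
  Num.sqrt (\sum_(i | P i) a i ^+ 2) * Num.sqrt (\sum_(i | P i) b i ^+ 2).
Proof.
rewrite -sqrtrM ?sumr_ge0 // => [|i _]; last exact: sqr_ge0.
apply: le_trans (ler_norm _) _; rewrite -sqrtr_sqr ler_sqrt ?cauchy_schwarz //.
by rewrite mulr_ge0 // sumr_ge0 // => i _; exact: sqr_ge0.
Qed.

Lemma sqr_normc_sum_mul_le (c z : I -> C) :
  normc (\sum_(i | P i) c i * z i) ^+ 2 <=
  (\sum_(i | P i) normc (c i) ^+ 2) * (\sum_(i | P i) normc (z i) ^+ 2).
Proof.
apply: le_trans (cauchy_schwarz _ _); rewrite ler_sqr ?nnegrE ?normc_ge0 //.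
  by apply: le_trans (normc_sum_le _ _) _; under eq_bigr do rewrite normcM.
by rewrite sumr_ge0 // => i _; rewrite mulr_ge0 ?normc_ge0.
Qed.

Lemma minkowski (z w : I -> C) :
  \sum_(i | P i) normc (z i + w i) ^+ 2 <=
  \sum_(i | P i) normc (z i) ^+ 2 + \sum_(i | P i) normc (w i) ^+ 2 +
  2 * Num.sqrt ((\sum_(i | P i) normc (z i) ^+ 2) * \sum_(i | P i) normc (w i) ^+ 2).
Proof.
have pointwise i : normc (z i + w i) ^+ 2 <=
    normc (z i) ^+ 2 + normc (w i) ^+ 2 + 2 * (normc (z i) * normc (w i)).
  have -> : normc (z i) ^+ 2 + normc (w i) ^+ 2 + 2 * (normc (z i) * normc (w i)) =
      (normc (z i) + normc (w i)) ^+ 2 by ring.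
  by rewrite ler_sqr ?nnegrE ?addr_ge0 ?normc_ge0 // le_normcD.
apply: le_trans (ler_sum _ (fun i _ => pointwise i)) _.
rewrite !big_split /= -mulr_sumr lerD2l ler_wpM2l // sqrtrM ?sum_mul_le_sqrt //.
by apply: sumr_ge0 => i _; exact: sqr_ge0.
Qed.

End CauchySchwarz.

Section Jordan.
Variable R : realType.

Let phi (t : R) : R := pi * sin t - 2 * t.

Let phi_derive (t : R) : is_derive t 1 phi (pi * cos t - 2).
Proof. by apply: is_derive_eq; rewrite -[2%:A]/(2 * 1) mulr1. Qed.

Let phi_cont : continuous phi.
Proof.
move=> t; apply/differentiable_continuous/derivable1_diffP.
by apply: ex_derive; exact: phi_derive.
Qed.

(* [phi] vanishes at [0] and [pi/2] and has a decreasing derivative, so the mean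
   value theorem on [[0, y]] and [[y, pi/2]] forces [phi y >= 0]. *)
Lemma jordan (y : R) : 0 <= y <= pi / 2 -> 2 * y <= pi * sin y.
Proof.
case/andP => y0 ypi.
have [c1 c1_itv phi_y] := MVT_segment y0 (fun t _ => phi_derive t)
  (continuous_subspaceT phi_cont).
have [c2 c2_itv phi_pi2] := MVT_segment ypi (fun t _ => phi_derive t)
  (continuous_subspaceT phi_cont).
move: c1_itv c2_itv phi_y phi_pi2; rewrite !in_itv /= /phi sin0 sin_pihalf.
move=> /andP[c1_ge0 c1_le] /andP[c2_ge c2_le] phi_y phi_pi2.
have pi_gt0 := pi_gt0 R.
have cos_le : cos c2 <= cos c1.
  have [->|c12] := eqVneq c1 c2; first by [].
  have c1_lt : c1 < c2 by rewrite lt_neqAle c12 (le_trans c1_le).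
  by apply/ltW; rewrite ltr_cos // in_itv /=; apply/andP; split; lra.
have [d1_ge0|d1_lt0] := lerP 0 (pi * cos c1 - 2).
  by have := mulr_ge0 d1_ge0 y0; lra.
have d2_le0 : pi * cos c2 - 2 <= 0 by rewrite lerBlDr add0r; nra.
have : 0 <= pi / 2 - y by lra.
by move/(mulr_le0_ge0 d2_le0); lra.
Qed.

End Jordan.

Lemma sqr_normc_sum_cis_le (R : realType) (theta y : R) (l : nat) :
  0 < y <= pi / 2 -> cos theta = cos (2 * y) ->
  normc (\sum_(i < l) cis theta ^+ i) ^+ 2 <= (pi / (2 * y)) ^+ 2.
Proof.
case/andP => y_gt0 y_le cos_theta.
set S := normc _.
have jordan_y : 2 * y <= pi * sin y by apply: jordan; rewrite (ltW y_gt0) y_le.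
have geom : 4 * sin y ^+ 2 * S ^+ 2 <= 4.
  rewrite -twoBcos_mul2 -cos_theta -sqr_normc_1Bcis -exprMn.
  have := normc_1Bcis_geom_le theta l; rewrite -/S => le2.
  have : 0 <= normc (1 - cis theta) * S by rewrite mulr_ge0 ?normc_ge0.
  nra.
have pi_gt0 := pi_gt0 R.
rewrite expr_div_n ler_pdivlMr ?exprn_gt0 ?mulr_gt0 //.
apply: le_trans (_ : S ^+ 2 * (pi * sin y) ^+ 2 <= _).
  by rewrite ler_wpM2l ?sqr_ge0 // ler_sqr ?nnegrE; lra.
rewrite exprMn mulrCA ler_piMr ?sqr_ge0 //; nra.
Qed.

Section TailWeight.
Variable R : realType.

Definition tail_weight (r s : R) : R := if r + 1 < s then (4 * s ^+ 2)^-1 else 0.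

Lemma tail_weight_ge0 r s : 0 <= tail_weight r s.
Proof. by rewrite /tail_weight; case: ifP; rewrite // invr_ge0 mulr_ge0 ?sqr_ge0. Qed.

(* Telescoping against [g j = 1 / max(r, j + u - 1)], using [1 / (4 s^2) <= (1 / (s - 1) - 1 / s) / 4]. *)
Lemma sum_tail_weight_le (m : nat) (r u : R) : 0 < r -> u <= 1 ->
  \sum_(j < m) tail_weight r (j%:R + u) <= (4 * r)^-1.
Proof.
move=> r_gt0 u_le1.
pose g (j : nat) : R := (Num.max r (j%:R + u - 1))^-1.
have max_gt0 j : 0 < Num.max r (j%:R + u - 1) by rewrite lt_max r_gt0.
have step j : tail_weight r (j%:R + u) <= (g j - g j.+1) / 4.
  rewrite /tail_weight /g; case: ifP => far.
    rewrite (max_idPr _); last lra.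
    rewrite -[j.+1%:R]natr1 (_ : j%:R + 1 + u - 1 = j%:R + u); last by ring.
    rewrite (max_idPr _); last lra.
    set s := j%:R + u; have s_gt1 : 1 < s by rewrite /s; lra.
    have -> : ((s - 1)^-1 - s^-1) / 4 = (4 * ((s - 1) * s))^-1.
      by field; rewrite !gt_eqF //; lra.
    by rewrite lef_pV2 ?posrE; nra.
  rewrite divr_ge0 // subr_ge0 lef_pV2 ?posrE //.
  by rewrite ge_max !le_max lexx /= -[j.+1%:R]natr1; apply/orP; right; lra.
have sum_le : \sum_(j < m) tail_weight r (j%:R + u) <= \sum_(j < m) (g j - g j.+1) / 4.
  by apply: ler_sum => j _; exact: step.
apply: le_trans sum_le _.
rewrite -mulr_suml -(big_mkord xpredT (fun j => g j - g j.+1)).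
rewrite (@telescope_sumr_eq _ 0 m (fun j => - g j)) // => [|j _]; last first.
  by rewrite opprK addrC.
rewrite opprK addrC.
have -> : g 0%N = r^-1 by rewrite /g add0r (max_idPl _) //; lra.
have : 0 <= g m by rewrite invr_ge0 ltW.
have : 0 < r^-1 by rewrite invr_gt0.
rewrite invfM; nra.
Qed.

End TailWeight.

Section Extension.
Variables (R : realType) (n m : nat).
Hypotheses (n_gt0 : (0 < n)%N) (m_gt0 : (0 < m)%N).
Local Notation C := R[i].
Local Notation extend := (@extend R n m).

Lemma extendD (u v : 'I_n -> C) x : extend (fun y => u y + v y) x = extend u x + extend v x.
Proof.
rewrite /extend; case: ifP => _; last by rewrite addr0.
by case: insub => [y|]; rewrite ?addr0.
Qed.

Lemma extend_sum (I : finType) (P : pred I) (c : I -> C) (w : I -> 'I_n -> C) x :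
  extend (fun y => \sum_(i | P i) c i * w i y) x = \sum_(i | P i) c i * extend (w i) x.
Proof.
rewrite /extend; case: ifP => _; last by rewrite big1 // => i _; rewrite mulr0.
by case: insub => [y|] //; rewrite big1 // => i _; rewrite mulr0.
Qed.

Lemma norm2sq_extend_le (u : 'I_n -> C) :
  norm2sq (extend u) <= n%:R / m%:R * norm2sq u.
Proof.
pose U (i : nat) : R := if insub i is Some y then normc (u y) ^+ 2 else 0.
have U_ge0 i : 0 <= U i by rewrite /U; case: insub => [y|] //; exact: sqr_ge0.
have sum_extend : \sum_x normc (extend u x) ^+ 2 = \sum_(i < minn n m) U i.
  rewrite (big_ord_widen m U (geq_minr n m)) [RHS]big_mkcond; apply: eq_bigr => x _.
  rewrite /extend /U; case: ifP => _; last by rewrite normc0 expr0n.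
  by case: insub => [y|] //; rewrite normc0 expr0n.
have sum_u : \sum_y normc (u y) ^+ 2 = \sum_(i < n) U i.
  by apply: eq_bigr => y _; rewrite /U -[nat_of_ord y]/(val y) valK.
rewrite !norm2sqE sum_extend sum_u.
have -> : n%:R / m%:R * (n%:R^-1 * \sum_(i < n) U i) = m%:R^-1 * \sum_(i < n) U i.
  by field; rewrite !pnatr_eq0 -!lt0n n_gt0 m_gt0.
rewrite ler_wpM2l ?invr_ge0 ?ler0n // (big_ord_widen n U (geq_minl n m)).
by rewrite [leRHS](bigID (fun i : 'I_n => (i < minn n m)%N)) /= lerDl sumr_ge0.
Qed.

Lemma fhat_extend_chi (a : 'I_n) (b : 'I_m) :
  fhat (extend (chi R a)) b = m%:R^-1 *
    \sum_(i < minn n m) cis (2 * pi * (val a)%:R / n%:R - 2 * pi * (val b)%:R / m%:R) ^+ i.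
Proof.
rewrite /fhat /ipZ; congr (_ * _).
rewrite (big_ord_widen m (fun i => cis _ ^+ i)) ?geq_minr // [RHS]big_mkcond.
apply: eq_bigr => x _; rewrite chiE cisN /extend; case: ifP => x_lt; last by rewrite mul0r.
have x_lt_n : (val x < n)%N by move: x_lt; rewrite leq_min => /andP[].
by rewrite (insubT (fun k => k < n)%N x_lt_n) chiE cisD cisX /=; congr cis; ring.
Qed.

End Extension.

Section SubnMod.
Variables (m p : nat).
Hypothesis p_lt_m : (p < m)%N.

Definition subn_mod (b : nat) : nat := if (b <= p)%N then (p - b)%N else (p + m - b)%N.

Lemma subn_modE (b : 'I_m) : (subn_mod b + b = p + m * (p < b))%N.
Proof.
rewrite /subn_mod leqNgt; have := ltn_ord b.
by case: (ltnP p b) => pb /=; rewrite ?muln0 ?muln1; lia.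
Qed.

Lemma subn_mod_lt (b : 'I_m) : (subn_mod b < m)%N.
Proof. by rewrite /subn_mod; have := ltn_ord b; case: ifP; lia. Qed.

Definition subn_mod_ord (b : 'I_m) : 'I_m := Ordinal (subn_mod_lt b).

Lemma subn_mod_ord_inj : injective subn_mod_ord.
Proof.
move=> b1 b2 /(congr1 val) /= eq_sub; apply: val_inj.
move: eq_sub (subn_modE b1) (subn_modE b2) (ltn_ord b1) (ltn_ord b2).
by case: (ltnP p b1) => pb1; case: (ltnP p b2) => pb2 /=; rewrite ?muln0 ?muln1; lia.
Qed.

End SubnMod.

Lemma distmod_le (R : realType) (k : nat) (y : R) (z : int) :
  distmod k y <= `|y - k%:R * z%:~R|.
Proof.
apply: ge_inf; last by exists z.
by exists 0 => _ [w _ <-]; exact: normr_ge0.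
Qed.

Lemma normc_nat (R : realType) (k : nat) : normc (k%:R : R[i]) = k%:R.
Proof.
by rewrite -(rmorph_nat (real_complex R)) /= expr0n /= addr0 sqrtr_sqr normr_nat.
Qed.

Section TruncatedCharacter.
Variables (R : realType) (n m : nat).
Hypotheses (n_gt0 : (0 < n)%N) (m_gt0 : (0 < m)%N).
Variable a : 'I_n.
Local Notation extend := (@extend R n m).
Local Notation phase b :=
  (2 * pi * (val a)%:R / n%:R - 2 * pi * (val b)%:R / m%:R : R).

Let m_gt0R : (0 : R) < m%:R. Proof. by rewrite ltr0n. Qed.

Lemma sqr_normc_fhat_extend_chi_le (b : 'I_m) (d : R) :
  0 < d -> 2 * d <= m%:R -> cos (phase b) = cos (2 * (pi * d / m%:R)) ->
  normc (fhat (extend (chi R a)) b) ^+ 2 <= (4 * d ^+ 2)^-1.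
Proof.
move=> d_gt0 d_le cos_phase; have pi_gt0 := pi_gt0 R.
have y_itv : 0 < pi * d / m%:R <= pi / 2.
  rewrite !mulr_gt0 ?invr_gt0 //= ler_pdivrMr // mulrAC ler_pdivlMr //.
  by rewrite -mulrA ler_pM2l // mulrC.
have := sqr_normc_sum_cis_le (minn n m) y_itv cos_phase.
have ratio (q : R) : 0 < q -> q / (2 * (q * d / m%:R)) = m%:R / (2 * d).
  by move=> q_gt0; field; rewrite !gt_eqF.
rewrite ratio // => sum_le.
have -> : (4 * d ^+ 2)^-1 = m%:R^-1 ^+ 2 * (m%:R / (2 * d)) ^+ 2.
  by field; rewrite !gt_eqF.
by rewrite fhat_extend_chi normcM normcV normc_nat exprMn ler_wpM2l ?sqr_ge0.
Qed.

(* The frequency [a] of [Z_n] sits at [(m/n) a = p + frac] in [Z_m]. *)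
Local Notation p := ((m * a) %/ n)%N.
Local Notation frac := (((m * a) %% n)%N%:R / n%:R : R).

Let p_lt_m : (p < m)%N.
Proof. by rewrite ltn_divLR // ltn_pmul2l. Qed.

Let frac_ge0 : 0 <= frac.
Proof. by rewrite divr_ge0 ?ler0n. Qed.

Let frac_lt1 : frac < 1.
Proof. by rewrite ltr_pdivrMr ?ltr0n // mul1r ltr_nat ltn_pmod. Qed.

(* Modulo [m], [(m/n) a] lies [v b] above [b] and [m - v b] below it. *)
Let v (b : 'I_m) : R := (subn_mod m p b)%:R + frac.

Let v_ge0 b : 0 <= v b.
Proof. by rewrite addr_ge0 ?ler0n. Qed.

Let v_lt b : v b < m%:R.
Proof.
have := subn_mod_lt p_lt_m b; rewrite -(ler_nat R) -natr1 /v; have := frac_lt1; lra.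
Qed.

Let freq_sub (b : 'I_m) :
  m%:R / n%:R * (val a)%:R - (val b)%:R = v b - m%:R * (p < b)%N%:R.
Proof.
have n_neq0 : (n%:R : R) != 0 by rewrite pnatr_eq0 -lt0n.
have freq : m%:R / n%:R * (val a)%:R = p%:R + frac.
  by rewrite mulrAC -natrM {1}(divn_eq (m * a) n) natrD natrM; field.
have := congr1 (GRing.natmul (1 : R)) (subn_modE p_lt_m b).
rewrite !natrD natrM freq /v; lra.
Qed.

Let distmod_le_v b : distmod m (m%:R / n%:R * (val a)%:R - (val b)%:R) <= v b.
Proof.
apply: le_trans (distmod_le _ _ (- (p < b)%N%:Z)) _.
by rewrite freq_sub intrN -pmulrn mulrN opprK subrK ger0_norm.
Qed.

Let distmod_le_mBv b :
  distmod m (m%:R / n%:R * (val a)%:R - (val b)%:R) <= m%:R - v b.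
Proof.
apply: le_trans (distmod_le _ _ (1 - (p < b)%N%:Z)) _.
rewrite freq_sub intrB -pmulrn ler0_norm; first by rewrite mulrBr; lra.
by rewrite mulrBr; have := v_lt b; lra.
Qed.

Let cos_phase (b : 'I_m) : cos (phase b) = cos (2 * (pi * v b / m%:R)).
Proof.
have m_neq0 : (m%:R : R) != 0 by rewrite gt_eqF.
have -> : phase b = 2 * (pi * v b / m%:R) - pi *+ 2 * (p < b)%N%:R.
  have -> : phase b = 2 * pi / m%:R * (m%:R / n%:R * (val a)%:R - (val b)%:R).
    by field; rewrite !pnatr_eq0 -!lt0n n_gt0 m_gt0.
  by rewrite freq_sub mulr2n; field.
case: (p < b)%N; rewrite ?mulr0 ?subr0 ?mulr1 //.
by rewrite -[in RHS](subrK (pi *+ 2) (2 * _)) cosD2pi.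
Qed.

Let cos_phaseC (b : 'I_m) : cos (phase b) = cos (2 * (pi * (m%:R - v b) / m%:R)).
Proof.
have -> : 2 * (pi * (m%:R - v b) / m%:R) = - (2 * (pi * v b / m%:R)) + pi *+ 2.
  by rewrite mulr2n; field; rewrite gt_eqF.
by rewrite cosD2pi cosN cos_phase.
Qed.

Let sqr_normc_fhat_le_tail (r : R) (b : 'I_m) :
  0 < r -> r + 1 < v b -> r + 1 < m%:R - v b ->
  normc (fhat (extend (chi R a)) b) ^+ 2 <= tail_weight r (v b) + tail_weight r (m%:R - v b).
Proof.
move=> r_gt0 far_v far_mBv; rewrite /tail_weight far_v far_mBv.
have v_gt0 : 0 < v b by lra.
have mBv_gt0 : 0 < m%:R - v b by lra.
have [le_v|lt_v] := lerP (v b) (m%:R - v b).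
  apply: le_trans (sqr_normc_fhat_extend_chi_le v_gt0 _ (cos_phase b)) _; first lra.
  by rewrite lerDl invr_ge0 mulr_ge0 ?sqr_ge0.
apply: le_trans (sqr_normc_fhat_extend_chi_le mBv_gt0 _ (cos_phaseC b)) _; first lra.
by rewrite lerDr invr_ge0 mulr_ge0 ?sqr_ge0.
Qed.

Let sum_tail_weight_v r :
  \sum_b tail_weight r (v b) = \sum_(j < m) tail_weight r (j%:R + frac).
Proof. by rewrite [RHS](reindex_inj (subn_mod_ord_inj (p_lt_m := p_lt_m))). Qed.

Let sum_tail_weight_mBv r :
  \sum_b tail_weight r (m%:R - v b) = \sum_(j < m) tail_weight r (j%:R + (1 - frac)).
Proof.
rewrite [RHS](reindex_inj rev_ord_inj) [RHS](reindex_inj (subn_mod_ord_inj (p_lt_m := p_lt_m))).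
apply: eq_bigr => b _; congr tail_weight; rewrite /v /= natrB ?subn_mod_lt //.
by rewrite -natr1; ring.
Qed.

Lemma tail_extend_chi_le (G : {set 'I_n}) (r : R) : a \in G -> 0 < r ->
  \sum_(b | b \notin Gamma' m G r) normc (fhat (extend (chi R a)) b) ^+ 2 <= (2 * r)^-1.
Proof.
move=> aG r_gt0.
have far b : b \notin Gamma' m G r -> r + 1 < v b /\ r + 1 < m%:R - v b.
  rewrite inE => /existsPn /(_ a); rewrite aG -ltNge => far.
  by split; [exact: lt_le_trans far (distmod_le_v b) | exact: lt_le_trans far (distmod_le_mBv b)].
apply: (@le_trans _ _ (\sum_b (tail_weight r (v b) + tail_weight r (m%:R - v b)))).
  rewrite big_mkcond /=; apply: ler_sum => b _; case: ifP => [/far[]|_].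
    exact: sqr_normc_fhat_le_tail.
  by rewrite addr_ge0 ?tail_weight_ge0.
rewrite big_split /= sum_tail_weight_v sum_tail_weight_mBv.
have -> : (2 * r)^-1 = (4 * r)^-1 + (4 * r)^-1 by field; rewrite gt_eqF.
by apply: lerD; apply: sum_tail_weight_le => //; have := frac_ge0; have := frac_lt1; lra.
Qed.

End TruncatedCharacter.

Lemma ler_add_sqrt_mul (R : realType) (x y x' y' : R) : 0 <= x -> 0 <= y ->
  x <= x' -> y <= y' -> x + y + 2 * Num.sqrt (x * y) <= x' + y' + 2 * Num.sqrt (x' * y').
Proof.
move=> x_ge0 y_ge0 le_x le_y.
have x'_ge0 := le_trans x_ge0 le_x; have y'_ge0 := le_trans y_ge0 le_y.
by rewrite !lerD // ler_wpM2l // ler_sqrt ?mulr_ge0 // ler_pM.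
Qed.

Section ExtendedRestriction.
Variables (R : realType) (n m : nat).
Hypotheses (n_gt0 : (0 < n)%N) (m_gt0 : (0 < m)%N).
Variables (f : 'I_n -> R[i]) (G : {set 'I_n}).
Local Notation extend := (@extend R n m).

Lemma tail_extend_restrF_le_mul (S : pred 'I_m) :
  \sum_(b | S b) normc (fhat (extend (restrF f G)) b) ^+ 2 <=
  (\sum_(a in G) normc (fhat f a) ^+ 2) *
  \sum_(a in G) \sum_(b | S b) normc (fhat (extend (chi R a)) b) ^+ 2.
Proof.
rewrite [X in _ * X]exchange_big mulr_sumr; apply: ler_sum => b _.
have -> : fhat (extend (restrF f G)) b = \sum_(a in G) fhat f a * fhat (extend (chi R a)) b.
  by rewrite -fhat_sum; apply: fhat_eq => x; rewrite /restrF extend_sum.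
exact: sqr_normc_sum_mul_le.
Qed.

Lemma tail_extend_restrF_le (eps' : R) : 0 < eps' ->
  \sum_(b | b \notin Gamma' m G (#|G|%:R * norm2sq f / (2 * eps')))
    normc (fhat (extend (restrF f G)) b) ^+ 2 <= eps'.
Proof.
move=> eps'_gt0; set r := _ / _; apply: le_trans (tail_extend_restrF_le_mul _) _.
set F := \sum_(a in G) normc (fhat f a) ^+ 2.
set T := \sum_(a in G) \sum_(b | _) _.
have F_ge0 : 0 <= F by apply: sumr_ge0 => a _; exact: sqr_ge0.
have F_le : F <= norm2sq f by exact: sum_fhat_le_norm2sq.
have [r_gt0|r_le0] := ltrP 0 r.
  have T_le : T <= #|G|%:R * (2 * r)^-1.
    rewrite mulr_natl -sumr_const; apply: ler_sum => a aG; exact: tail_extend_chi_le.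
  apply: le_trans (ler_pM F_ge0 _ F_le T_le) _.
    by apply: sumr_ge0 => a _; apply: sumr_ge0 => b _; exact: sqr_ge0.
  have Gf_neq0 : #|G|%:R * norm2sq f != 0.
    by apply: contraTneq r_gt0; rewrite /r => ->; rewrite mul0r ltxx.
  move: Gf_neq0; rewrite mulf_eq0 negb_or => /andP[G_neq0 f_neq0].
  rewrite (_ : norm2sq f * (#|G|%:R * (2 * r)^-1) = eps') //.
  by rewrite /r; field; rewrite G_neq0 f_neq0 gt_eqF.
have F_eq0 : F = 0.
  have Gf_le0 : #|G|%:R * norm2sq f <= 0.
    by move: r_le0; rewrite /r pmulr_lle0 ?invr_gt0 ?mulr_gt0.
  have [G_eq0|G_gt0] := posnP #|G|; first by rewrite /F (cards0_eq G_eq0) big_set0.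
  apply/le_anti; rewrite F_ge0 andbT (le_trans F_le) //.
  by move: Gf_le0; rewrite pmulr_rle0 // ltr0n.
by rewrite F_eq0 mul0r ltW.
Qed.

End ExtendedRestriction.

Theorem proposition4p3 (R : realType) (m n : nat) (hn : (0 < n)%N) (hm : (0 < m)%N)
  (f : 'I_n -> R[i]) (G : {set 'I_n}) (eps : R) (heps : 0 < eps)
  (hG : norm2sq (fun x => f x - restrF f G x) <= eps)
  (eps' : R) (heps' : 0 < eps') :
  let g : 'I_m -> R[i] := @extend R n m f in
  let r : R := (#|G|%:R * norm2sq f) / (2 * eps') in
  let G' : {set 'I_m} := @Gamma' R n m G r in
  let t : R := n%:R / m%:R in
  norm2sq (fun x => g x - restrF g G' x)
    <= t * eps + eps' + 2 * Num.sqrt (t * eps * eps').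
Proof.
cbv zeta; pose e x := f x - restrF f G x.
have g_split x : @extend R n m f x = @extend R n m e x + @extend R n m (restrF f G) x.
  by rewrite -extendD; congr (extend _ x); apply/funext => y; rewrite subrK.
rewrite (norm2sq_sub_restrF hm).
under eq_bigr do rewrite (fhat_eq _ g_split) fhatD.
apply: le_trans (minkowski _ _ _) _; apply: ler_add_sqrt_mul.
- by apply: sumr_ge0 => b _; exact: sqr_ge0.
- by apply: sumr_ge0 => b _; exact: sqr_ge0.
- apply: le_trans (sum_fhat_le_norm2sq hm _ _) _.
  by apply: le_trans (norm2sq_extend_le hn hm _) _; rewrite ler_wpM2l ?divr_ge0 ?ler0n.
- exact: tail_extend_restrF_le.
Qed.
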